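(* Let $Q$ be a quadrilateral in $K^2$. The bisector locus of $Q$ is degenerate if and only if there is a pair $L,L'$ of parallel sides of $Q$ or the two diagonals $L,L'$ of $Q$ are parallel. In this case, the bisector locus of $Q$ is the union of the midline of $L$ and $L'$ and the line through the midpoints of $L$ and $L'$.
   Context: $K$ is a field of characteristic $\neq 2$, and we work in $K^2$ (inside the projective plane). Every line $L$ has an equation $tX-uY+v=0$ normalized so that $t=1$ if $u=0$ and $u=1$ if $u\neq 0$; the coefficients are denoted $t_L,u_L,v_L$. A quadrilateral $Q=ABA'B'$ consists of four distinct lines $A,B,A',B'$ (sides), not all through one point, with adjacent sides ($A,B$; $B,A'$; $A',B'$; $B',A$) not parallel; opposite sides ($A,A'$; $B,B'$) may be parallel. Vertices: $A\cap B$, $B\cap A'$, $A'\cap B'$, $B'\cap A$ (two may coincide if three sides are concurrent). Diagonals: the lines through nonadjacent vertices. The midpoint of a side or diagonal is the midpoint of the two vertices of $Q$ on it. The centroid $(h,k)$ is the midpoint of the midpoints of the diagonals (equivalently the average of the vertices). A diagonal point is the intersection of a pair of opposite sides or of the diagonals. The midline of two distinct parallel lines is the line formed by the midpoints of points of one with points of the other. Define $\alpha=t_Au_Bu_{A'}u_{B'}-u_At_Bu_{A'}u_{B'}+u_Au_Bt_{A'}u_{B'}-u_Au_Bu_{A'}t_{B'}$, $\beta=t_Au_Bt_{A'}u_{B'}-u_At_Bu_{A'}t_{B'}$, $\gamma=t_At_Bt_{A'}u_{B'}-t_At_Bu_{A'}t_{B'}+t_Au_Bt_{A'}t_{B'}-u_At_Bt_{A'}t_{B'}$,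 $\Phi_Q(X,Y)=\gamma X^2-2\beta XY+\alpha Y^2$. A line $\ell$ crosses a pair $\{\ell_1,\ell_2\}$ if it is distinct from both and not parallel to both; $\mathrm{mid}_{\{\ell_1,\ell_2\}}(\ell)$ is the midpoint of the points where $\ell$ meets $\ell_1,\ell_2$ (the point at infinity of $\ell$ if one of them is at infinity). $\ell$ bisects $Q$ if $\mathrm{mid}_{\mathsf P}(\ell)$ is the same for all pairs $\mathsf P$ among $\{A,A'\},\{B,B'\}$ that $\ell$ crosses; this common point is the midpoint of the bisector. The bisector locus of $Q$ is the set of midpoints of bisectors of $Q$; it is the zero set of the conic $\Phi_Q(X-h,Y-k)-\Phi_Q(a-h,b-k)$, where $(a,b)$ is any finite diagonal point of $Q$. A conic (quadratic polynomial) over $K$ is degenerate if it is a product of linear polynomials over the algebraic closure of $K$. *)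

From mathcomp Require Import all_boot all_order all_algebra.
Set Implicit Arguments. Unset Strict Implicit. Unset Printing Implicit Defensive.
Import Order.TTheory GRing.Theory Num.Theory.
Local Open Scope ring_scope.

Section Geometry.
Variable K : fieldType.

Definition point := (K * K)%type.

(* A line  t X - u Y + v = 0,  given by its coefficients (t,u,v). *)
Record line := Line { lt : K; lu : K; lv : K }.

Definition normalized (L : line) : bool :=
  if lu L == 0 then lt L == 1 else lu L == 1.

Definition on_line (L : line) (p : point) : bool :=
  lt L * p.1 - lu L * p.2 + lv L == 0.

(* Two lines are parallel iff their direction vectors (u,t) are proportional
   (this includes equal lines). *)
Definition parallel (L M : line) : bool := lt L * lu M == lu L * lt M.

(* Intersection point of two non-parallel lines (Cramer's rule). *)
Definition meet (L M : line) : point :=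
  let D := lu L * lt M - lt L * lu M in
  ((lv L * lu M - lu L * lv M) / D, (lt M * lv L - lt L * lv M) / D).

Definition midpoint (p q : point) : point :=
  ((p.1 + q.1) / 2%:R, (p.2 + q.2) / 2%:R).

Definition line_thru (p q : point) : line :=
  let d1 := q.1 - p.1 in let d2 := q.2 - p.2 in
  if d1 == 0 then Line 1 0 ((d1 * p.2 - d2 * p.1) / d2)
  else Line (d2 / d1) 1 ((d1 * p.2 - d2 * p.1) / d1).

Definition midline (L M : line) (m : point) : Prop :=
  exists p q, [/\ on_line L p, on_line M q & m = midpoint p q].

Record quad := Quad { qA : line; qB : line; qA' : line; qB' : line }.

Definition is_quadrilateral (Q : quad) : Prop :=
  let: Quad A B A' B' := Q in
  [/\ [&& normalized A, normalized B, normalized A' & normalized B'],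
      [/\ A <> B, A <> A', A <> B' & [/\ B <> A', B <> B' & A' <> B']],
      ~ (exists p, [&& on_line A p, on_line B p, on_line A' p & on_line B' p])
    & [&& ~~ parallel A B, ~~ parallel B A', ~~ parallel A' B'
        & ~~ parallel B' A]].

Definition vAB (Q : quad) := meet (qA Q) (qB Q).
Definition vBA' (Q : quad) := meet (qB Q) (qA' Q).
Definition vA'B' (Q : quad) := meet (qA' Q) (qB' Q).
Definition vB'A (Q : quad) := meet (qB' Q) (qA Q).

Definition diag1 (Q : quad) := line_thru (vAB Q) (vA'B' Q).
Definition diag2 (Q : quad) := line_thru (vBA' Q) (vB'A Q).

Definition midA (Q : quad) := midpoint (vAB Q) (vB'A Q).
Definition midB (Q : quad) := midpoint (vAB Q) (vBA' Q).
Definition midA' (Q : quad) := midpoint (vBA' Q) (vA'B' Q).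
Definition midB' (Q : quad) := midpoint (vA'B' Q) (vB'A Q).
Definition middiag1 (Q : quad) := midpoint (vAB Q) (vA'B' Q).
Definition middiag2 (Q : quad) := midpoint (vBA' Q) (vB'A Q).

Definition centroid (Q : quad) := midpoint (middiag1 Q) (middiag2 Q).

Definition finite_diag_point (Q : quad) (p : point) : Prop :=
  [\/ [&& ~~ parallel (qA Q) (qA' Q), on_line (qA Q) p & on_line (qA' Q) p],
      [&& ~~ parallel (qB Q) (qB' Q), on_line (qB Q) p & on_line (qB' Q) p]
    | [&& ~~ parallel (diag1 Q) (diag2 Q), on_line (diag1 Q) p
        & on_line (diag2 Q) p]].

Definition alpha (Q : quad) : K :=
  let: Quad A B A' B' := Q in
  lt A * lu B * lu A' * lu B' - lu A * lt B * lu A' * lu B'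
  + lu A * lu B * lt A' * lu B' - lu A * lu B * lu A' * lt B'.
Definition beta (Q : quad) : K :=
  let: Quad A B A' B' := Q in
  lt A * lu B * lt A' * lu B' - lu A * lt B * lu A' * lt B'.
Definition gamma (Q : quad) : K :=
  let: Quad A B A' B' := Q in
  lt A * lt B * lt A' * lu B' - lt A * lt B * lu A' * lt B'
  + lt A * lu B * lt A' * lt B' - lu A * lt B * lt A' * lt B'.

Definition PhiQ (Q : quad) (x y : K) : K :=
  gamma Q * x ^+ 2 - 2%:R * beta Q * x * y + alpha Q * y ^+ 2.

End Geometry.

(* Bivariate polynomials over a ring R, as {poly {poly R}}:
   the outer variable is X, the inner variable is Y. *)
Section Bivariate.
Variable R : comNzRingType.
Definition pX : {poly {poly R}} := 'X.
Definition pY : {poly {poly R}} := ('X)%:P.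
Definition pC (c : R) : {poly {poly R}} := (c%:P)%:P.
Definition eval2 (f : {poly {poly R}}) (x y : R) : R := (f.[x%:P]).[y].
Definition lin2 (a b c : R) : {poly {poly R}} := pC a * pX + pC b * pY + pC c.
End Bivariate.

Definition bisector_conic (K : fieldType) (Q : quad K) (ab : point K)
  : {poly {poly K}} :=
  let h := (centroid Q).1 in let k := (centroid Q).2 in
  pC (gamma Q) * (pX K - pC h) ^+ 2
  - pC (2%:R * beta Q) * (pX K - pC h) * (pY K - pC k)
  + pC (alpha Q) * (pY K - pC k) ^+ 2
  - pC (PhiQ Q (ab.1 - h) (ab.2 - k)).

Definition bisector_locus (K : fieldType) (Q : quad K) (ab : point K)
  (p : point K) : Prop :=
  eval2 (bisector_conic Q ab) p.1 p.2 = 0.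

Definition is_alg_closure (K : fieldType) (L : closedFieldType)
  (iota : {rmorphism K -> L}) : Prop :=
  forall x : L, exists2 p : {poly K}, p != 0 & root (map_poly iota p) x.

Definition degenerate (K : fieldType) (L : closedFieldType)
  (iota : {rmorphism K -> L}) (f : {poly {poly K}}) : Prop :=
  exists a1 b1 c1 a2 b2 c2 : L,
    [/\ a1 != 0 \/ b1 != 0, a2 != 0 \/ b2 != 0
      & map_poly (map_poly iota) f = lin2 a1 b1 c1 * lin2 a2 b2 c2].

(* The quadratic part [Phi] of the bisector conic has discriminant
   [beta^2 - alpha gamma = [A,B] [B,A'] [A',B'] [B',A]], the product of the
   determinants of adjacent sides, so it is nondegenerate; a conic with
   nondegenerate quadratic part splits into two lines only if it passes through
   its centre, i.e. only if its constant term [c] vanishes.  A direct computation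
   gives [16 c = [A,A'] [B,B'] [d1,d2]], which vanishes exactly when a pair of
   opposite sides or the two diagonals are parallel.  For such a pair [L, L'],
   both their common direction and the vector joining their midpoints are
   isotropic for [Phi], so [Phi] is the product of the two linear forms vanishing
   on them; centred at the centroid, which is the midpoint of the two midpoints,
   these vanish on the midline of [L, L'] and on the line through the midpoints. *)

From mathcomp Require Import all_boot all_order all_algebra.
From mathcomp Require Import ring.
Import GRing.Theory.
Set Implicit Arguments. Unset Strict Implicit. Unset Printing Implicit Defensive.
Local Open Scope ring_scope.

Section BinaryForms.
Variable K : fieldType.
Implicit Types (g b a c : K) (w z : K * K).

Definition cross w z : K := w.1 * z.2 - w.2 * z.1.

Definition vec (p q : K * K) : K * K := (q.1 - p.1, q.2 - p.2).

Definition bqf g b a z : K := g * z.1 ^+ 2 - 2%:R * b * z.1 * z.2 + a * z.2 ^+ 2.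

Lemma pow2_neq0 n : 2%:R != 0 :> K -> (2 ^ n)%:R != 0 :> K.
Proof. by move=> h2; rewrite natrX expf_neq0. Qed.

Lemma bqfZ g b a s w : bqf g b a (s * w.1, s * w.2) = s ^+ 2 * bqf g b a w.
Proof. by rewrite /bqf /=; ring. Qed.

Definition bqf_splits g b a : Prop :=
  exists w1 w2, [/\ w1 != (0, 0), w2 != (0, 0)
                  & forall z, bqf g b a z = cross w1 z * cross w2 z].

Lemma bqf_factor_isotropic g b a w1 w2 :
  2%:R != 0 :> K -> b ^+ 2 - a * g != 0 ->
  bqf g b a w1 = 0 -> bqf g b a w2 = 0 -> cross w1 w2 != 0 ->
  exists2 k, k != 0 & forall z, bqf g b a z = k * cross w1 z * cross w2 z.
Proof.
move=> h2 hdisc q1 q2 hw.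
(* In the basis [w1, w2] only the cross term of the form survives; its
   coefficient is the polar form [polar], nonzero by nondegeneracy. *)
set polar := g * w1.1 * w2.1 - b * (w1.1 * w2.2 + w1.2 * w2.1) + a * w1.2 * w2.2.
have expand z : cross w1 w2 ^+ 2 * bqf g b a z =
    bqf g b a w1 * cross z w2 ^+ 2 + 2%:R * polar * cross z w2 * cross w1 z
    + bqf g b a w2 * cross w1 z ^+ 2.
  by rewrite /bqf /cross /polar; ring.
have polar_neq0 : polar != 0.
  apply: contra hdisc => /eqP polar0.
  have bqf0 z : bqf g b a z = 0.
    apply/eqP; have := expand z; rewrite q1 q2 polar0 !(mul0r, mulr0, addr0).
    by move/eqP; rewrite mulf_eq0 expf_eq0 (negbTE hw) /=.
  have eg : g = 0 by rewrite -(bqf0 (1, 0)) /bqf /=; ring.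
  have ea : a = 0 by rewrite -(bqf0 (0, 1)) /bqf /=; ring.
  have /eqP : 2%:R * b = 0 by rewrite -[RHS]oppr0 -(bqf0 (1, 1)) /bqf eg ea /=; ring.
  by rewrite mulf_eq0 (negbTE h2) => /eqP ->; rewrite ea expr0n mul0r subrr.
exists (- (2%:R * polar) / cross w1 w2 ^+ 2).
  by rewrite mulf_neq0 ?oppr_eq0 ?mulf_neq0 ?invr_eq0 ?expf_neq0.
move=> z; apply: (mulfI (expf_neq0 2 hw)); rewrite expand q1 q2 /cross.
by field.
Qed.

(* Comparing coefficients at the six points [(0,0), (+-1,0), (0,+-1), (1,1)]:
   the linear terms give [a1 e2 + a2 e1 = 0 = b1 e2 + b2 e1], and the quadratic
   terms make [(a1 b2 - a2 b1)^2] equal to [4 (b^2 - a g) != 0]; hence [e1 = 0]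
   and the constant term [c = - e1 e2] vanishes. *)
Lemma bqf_sub_const_factor_eq0 g b a c a1 b1 e1 a2 b2 e2 :
  2%:R != 0 :> K -> b ^+ 2 - a * g != 0 ->
  let R z := (a1 * z.1 + b1 * z.2 + e1) * (a2 * z.1 + b2 * z.2 + e2) in
  bqf g b a (0, 0) - c = R (0, 0) ->
  bqf g b a (1, 0) - c = R (1, 0) -> bqf g b a (-1, 0) - c = R (-1, 0) ->
  bqf g b a (0, 1) - c = R (0, 1) -> bqf g b a (0, -1) - c = R (0, -1) ->
  bqf g b a (1, 1) - c = R (1, 1) -> c = 0.
Proof.
move=> h2 hdisc R E00 E10 Em10 E01 E0m1 E11.
have lin1 : a1 * e2 + a2 * e1 = 0.
  apply: (mulfI h2); transitivity (R (1, 0) - R (-1, 0)); first by rewrite /R /=; ring.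
  by rewrite -E10 -Em10 /bqf /=; ring.
have lin2 : b1 * e2 + b2 * e1 = 0.
  apply: (mulfI h2); transitivity (R (0, 1) - R (0, -1)); first by rewrite /R /=; ring.
  by rewrite -E01 -E0m1 /bqf /=; ring.
have quadX : g = a1 * a2.
  apply: (mulfI h2); transitivity (R (1, 0) + R (-1, 0) - 2%:R * R (0, 0)).
    by rewrite -E10 -Em10 -E00 /bqf /=; ring.
  by rewrite /R /=; ring.
have quadY : a = b1 * b2.
  apply: (mulfI h2); transitivity (R (0, 1) + R (0, -1) - 2%:R * R (0, 0)).
    by rewrite -E01 -E0m1 -E00 /bqf /=; ring.
  by rewrite /R /=; ring.
have quadXY : - (2%:R * b) = a1 * b2 + a2 * b1.
  transitivity (R (1, 1) - R (0, 0) - R (1, 0) - R (0, 1) + 2%:R * R (0, 0)).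
    by rewrite -E11 -E00 -E10 -E01 /bqf /=; ring.
  by rewrite /R /=; ring.
have det_neq0 : a1 * b2 - a2 * b1 != 0.
  apply: contra hdisc => /eqP det0; apply/eqP/(mulfI (mulf_neq0 h2 h2)).
  transitivity ((- (2%:R * b)) ^+ 2 - 4%:R * g * a); first by ring.
  rewrite quadXY quadX quadY; transitivity ((a1 * b2 - a2 * b1) ^+ 2); first by ring.
  by rewrite det0; ring.
have e1_0 : e1 = 0.
  apply: (mulfI det_neq0); transitivity (a1 * (b1 * e2 + b2 * e1) - b1 * (a1 * e2 + a2 * e1)).
    by ring.
  by rewrite lin1 lin2; ring.
apply: oppr_inj; transitivity (R (0, 0)); first by rewrite -E00 /bqf /=; ring.
by rewrite /R e1_0 /=; ring.
Qed.

End BinaryForms.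

Section Lines.
Variable K : fieldType.
Implicit Types (L M N : line K) (p q r : point K) (w z : K * K).

Definition det L M : K := lu L * lt M - lt L * lu M.

Definition line_val L p : K := lt L * p.1 - lu L * p.2 + lv L.

(* [Line t u v] has direction [(u, t)]. *)
Definition line_dir p w : line K := Line w.2 w.1 (w.1 * p.2 - w.2 * p.1).

Lemma eq_line L M : lt L = lt M -> lu L = lu M -> lv L = lv M -> L = M.
Proof. by case: L; case: M => /= ? ? ? ? ? ? -> -> ->. Qed.

Lemma parallel_det L M : parallel L M = (det L M == 0).
Proof. by rewrite /parallel /det subr_eq0 eq_sym. Qed.

Lemma meet_on L M : ~~ parallel L M -> on_line L (meet L M) /\ on_line M (meet L M).
Proof.
rewrite parallel_det /det /on_line /meet.
by case: L => tL uL vL; case: M => tM uM vM /= hD; split; apply/eqP; field.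
Qed.

Lemma meet_uniq L M p : ~~ parallel L M -> on_line L p -> on_line M p -> p = meet L M.
Proof.
rewrite parallel_det /det /on_line /meet.
case: L => tL uL vL; case: M => tM uM vM; case: p => x y /= hD /eqP eL /eqP eM.
congr (_, _); apply: (mulIf hD); rewrite mulfVK //.
  transitivity (vL * uM - uL * vM + uL * (tM * x - uM * y + vM) - uM * (tL * x - uL * y + vL)).
    by ring.
  by rewrite eL eM; ring.
transitivity (tM * vL - tL * vM + tL * (tM * x - uM * y + vM) - tM * (tL * x - uL * y + vL)).
  by ring.
by rewrite eL eM; ring.
Qed.

Lemma normalized_parallel L M :
  normalized L -> normalized M -> parallel L M -> lt L = lt M /\ lu L = lu M.
Proof.
case: L => tL uL vL; case: M => tM uM vM; rewrite /normalized /parallel /=.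
have [->|uL_neq0] := eqVneq uL 0 => /eqP hL; have [->|uM_neq0] := eqVneq uM 0 => /eqP hM.
- by rewrite hL hM.
- by rewrite hL hM mul0r mul1r oner_eq0.
- by rewrite hL hM mulr0 mulr1 eq_sym oner_eq0.
- by rewrite hL hM mulr1 mul1r => /eqP.
Qed.

Lemma normalized_dir_neq0 L : normalized L -> (lu L, lt L) != (0, 0).
Proof.
case: L => t u v; rewrite /normalized xpair_eqE negb_and /=.
by have [_ /eqP ->|//] := eqVneq u 0; rewrite oner_eq0 orbT.
Qed.

Lemma normalized_parallel_eq L M p :
  normalized L -> normalized M -> parallel L M -> on_line L p -> on_line M p -> L = M.
Proof.
move=> nL nM /(normalized_parallel nL nM) []; clear nL nM.
case: L => tL uL vL; case: M => tM uM vM /= <- <-; rewrite /on_line /= => /eqP eL /eqP eM.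
congr Line; apply/eqP; rewrite -subr_eq0; apply/eqP.
transitivity ((tL * p.1 - uL * p.2 + vL) - (tL * p.1 - uL * p.2 + vM)); first by ring.
by rewrite eL eM subrr.
Qed.

Lemma on_line_dir p w r : on_line (line_dir p w) r = (cross w (vec p r) == 0).
Proof.
rewrite /on_line /cross /= -oppr_eq0; congr (_ == 0); ring.
Qed.

Lemma line_dirE L p : on_line L p -> line_dir p (lu L, lt L) = L.
Proof.
case: L => t u v; rewrite /on_line /line_dir /= => /eqP e; congr Line.
by rewrite -[RHS]subr0 -e; ring.
Qed.

Lemma parallel_line_dir p q w z : parallel (line_dir p w) (line_dir q z) = (cross w z == 0).
Proof. by rewrite parallel_det /det /cross. Qed.

Lemma line_thru_normalized p q : normalized (line_thru p q).
Proof. by rewrite /line_thru; case: eqP => _; rewrite /normalized /= ?eqxx ?oner_eq0. Qed.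

Lemma line_thru_coef p q : p != q ->
  exists2 s, s != 0 & [/\ lt (line_thru p q) = s * (vec p q).2,
    lu (line_thru p q) = s * (vec p q).1
    & lv (line_thru p q) = s * ((vec p q).1 * p.2 - (vec p q).2 * p.1)].
Proof.
case: p => p1 p2; case: q => q1 q2 /= hpq; rewrite /line_thru /vec /=.
have [d1_0|d1_neq0] := eqVneq (q1 - p1) 0; last first.
  by exists (q1 - p1)^-1; rewrite ?invr_eq0 //=; split; field.
have d2_neq0 : q2 - p2 != 0.
  apply: contra hpq; rewrite subr_eq0 => /eqP d2_0.
  by rewrite d2_0 -(subrK p1 q1) d1_0 add0r.
by exists (q2 - p2)^-1; rewrite ?invr_eq0 //=; split; rewrite ?d1_0; field.
Qed.

Lemma on_line_thru p q r : p != q ->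
  on_line (line_thru p q) r = (cross (vec p q) (vec p r) == 0).
Proof.
move=> /line_thru_coef [s s_neq0 [et eu ev]]; rewrite /on_line et eu ev.
rewrite (_ : _ + _ = - s * cross (vec p q) (vec p r)); last by rewrite /cross /=; ring.
by rewrite mulf_eq0 oppr_eq0 (negbTE s_neq0).
Qed.

Lemma on_line_thru_l p q : p != q -> on_line (line_thru p q) p.
Proof. by move=> pq; rewrite on_line_thru //; apply/eqP; rewrite /cross /=; ring. Qed.

Lemma on_line_thru_r p q : p != q -> on_line (line_thru p q) q.
Proof. by move=> pq; rewrite on_line_thru //; apply/eqP; rewrite /cross; ring. Qed.

Lemma on_line_thru_dir p q r : p != q ->
  on_line (line_thru p q) r = on_line (line_dir p (vec p q)) r.
Proof. by move=> pq; rewrite on_line_thru // on_line_dir. Qed.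

Lemma parallel_line_thru p q r s : p != q -> r != s ->
  parallel (line_thru p q) (line_thru r s) = (cross (vec p q) (vec r s) == 0).
Proof.
move=> /line_thru_coef [k k_neq0 [et eu _]] /line_thru_coef [l l_neq0 [et' eu' _]].
rewrite parallel_det /det et eu et' eu'.
rewrite (_ : _ - _ = k * l * cross (vec p q) (vec r s)); last by rewrite /cross; ring.
by rewrite !mulf_eq0 (negbTE k_neq0) (negbTE l_neq0).
Qed.

Lemma on_line_midpoint L p q :
  2%:R != 0 :> K -> on_line L p -> on_line L q -> on_line L (midpoint p q).
Proof.
rewrite /on_line /midpoint /= => h2 /eqP eL /eqP eM; apply/eqP.
transitivity ((lt L * p.1 - lu L * p.2 + lv L + (lt L * q.1 - lu L * q.2 + lv L)) / 2%:R).
  by field.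
by rewrite eL eM addr0 mul0r.
Qed.

Lemma midlineE M N m : 2%:R != 0 :> K ->
  normalized M -> normalized N -> parallel M N ->
  midline M N m <-> lt M * m.1 - lu M * m.2 + (lv M + lv N) / 2%:R = 0.
Proof.
move=> h2 nM nN /(normalized_parallel nM nN) [].
have := normalized_dir_neq0 nM; rewrite xpair_eqE negb_and; clear nM nN.
case: M => t u vM; case: N => tN uN vN /= dir_neq0 <- <-.
rewrite /midline /on_line /midpoint /=; split.
  move=> [[p1 p2] [[q1 q2] [/eqP eM /eqP eN ->]]] /=.
  transitivity ((t * p1 - u * p2 + vM + (t * q1 - u * q2 + vN)) / 2%:R); first by field.
  by rewrite eM eN addr0 mul0r.
case: m => m1 m2 /= e.
have [u0|u_neq0] := eqVneq u 0.
  have t_neq0 : t != 0 by move: dir_neq0; rewrite u0 eqxx.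
  exists (- vM / t, m2), (- vN / t, m2); split => /=.
  - by rewrite u0; apply/eqP; field.
  - by rewrite u0; apply/eqP; field.
  congr (_, _); last by field.
  apply: (mulfI t_neq0); transitivity (t * m1 - u * m2 + (vM + vN) / 2%:R - (vM + vN) / 2%:R).
    by rewrite u0; ring.
  by rewrite e; field; rewrite h2 t_neq0.
exists (m1, (t * m1 + vM) / u), (m1, (t * m1 + vN) / u); split => /=.
- by apply/eqP; field.
- by apply/eqP; field.
congr (_, _); first by field.
apply: (mulfI u_neq0).
transitivity (- (t * m1 - u * m2 + (vM + vN) / 2%:R) + t * m1 + (vM + vN) / 2%:R).
  by ring.
by rewrite e; field; rewrite h2 u_neq0.
Qed.

End Lines.

Local Notation Phi Q := (bqf (gamma Q) (beta Q) (alpha Q)).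

Lemma eval2M (R : comNzRingType) (f g : {poly {poly R}}) x y :
  eval2 (f * g) x y = eval2 f x y * eval2 g x y.
Proof. by rewrite /eval2 !hornerM. Qed.

Lemma eval2_lin2 (R : comNzRingType) (a b c x y : R) :
  eval2 (lin2 a b c) x y = a * x + b * y + c.
Proof. by rewrite /eval2 /lin2 /pC /pX /pY !hornerE. Qed.

Section Degeneracy.
Variables (K : fieldType) (L : closedFieldType) (iota : {rmorphism K -> L}).
Variables (Q : quad K) (ab : point K).
Local Notation cen := (centroid Q).

Lemma map_lin2 a b c :
  map_poly (map_poly iota) (lin2 a b c) = lin2 (iota a) (iota b) (iota c).
Proof.
rewrite /lin2 /pC /pX /pY !rmorphD !rmorphM /= !map_polyC !map_polyX /= !map_polyC.
by rewrite map_polyX.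
Qed.

Lemma eval2_map (f : {poly {poly K}}) x y :
  eval2 (map_poly (map_poly iota) f) (iota x) (iota y) = iota (eval2 f x y).
Proof.
rewrite /eval2 -horner_map /=; congr (_.[_]).
by rewrite -(map_polyC iota) horner_map.
Qed.

Lemma eval2_bisector_conic x y :
  eval2 (bisector_conic Q ab) x y = Phi Q (vec cen (x, y)) - Phi Q (vec cen ab).
Proof. by rewrite /eval2 /bisector_conic /pC /pX /pY !hornerE /PhiQ /bqf /=; ring. Qed.

Lemma rmorph_bqf g b a z :
  iota (bqf g b a z) = bqf (iota g) (iota b) (iota a) (iota z.1, iota z.2).
Proof. by rewrite /bqf /= rmorphD rmorphB !rmorphM rmorph_nat; ring. Qed.

Lemma bisector_const_degenerate :
  2%:R != 0 :> K -> beta Q ^+ 2 - alpha Q * gamma Q != 0 ->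
  degenerate iota (bisector_conic Q ab) -> Phi Q (vec cen ab) = 0.
Proof.
move=> h2 hdisc [a1 [b1 [c1 [a2 [b2 [c2 [_ _ E]]]]]]].
set e1 := a1 * iota cen.1 + b1 * iota cen.2 + c1.
set e2 := a2 * iota cen.1 + b2 * iota cen.2 + c2.
have E_at (x y : K) :
    bqf (iota (gamma Q)) (iota (beta Q)) (iota (alpha Q)) (iota x, iota y)
    - iota (Phi Q (vec cen ab))
  = (a1 * iota x + b1 * iota y + e1) * (a2 * iota x + b2 * iota y + e2).
  have := eval2_map (bisector_conic Q ab) (cen.1 + x) (cen.2 + y).
  rewrite E eval2M !eval2_lin2 eval2_bisector_conic rmorphB.
  rewrite (_ : vec cen _ = (x, y)); last by rewrite /vec /= !(addrC cen.1, addrC cen.2) !addrK.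
  rewrite (rmorph_bqf _ _ _ (x, y)).
  by move=> <-; rewrite !rmorphD /e1 /e2; ring.
apply/eqP; rewrite -(fmorph_eq0 iota); apply/eqP.
apply: (@bqf_sub_const_factor_eq0 L (iota (gamma Q)) (iota (beta Q)) (iota (alpha Q)) _
  a1 b1 e1 a2 b2 e2).
- by rewrite -(rmorph_nat iota) fmorph_eq0.
- by rewrite -rmorphXn -!rmorphM -rmorphB fmorph_eq0.
- by have := E_at 0 0; rewrite rmorph0.
- by have := E_at 1 0; rewrite rmorph0 rmorph1.
- by have := E_at (-1) 0; rewrite rmorph0 rmorphN1.
- by have := E_at 0 1; rewrite rmorph0 rmorph1.
- by have := E_at 0 (-1); rewrite rmorph0 rmorphN1.
- by have := E_at 1 1; rewrite rmorph1.
Qed.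

Lemma bisector_conic_degenerate :
  bqf_splits (gamma Q) (beta Q) (alpha Q) -> Phi Q (vec cen ab) = 0 ->
  degenerate iota (bisector_conic Q ab).
Proof.
move=> [w1 [w2 [w1_neq0 w2_neq0 factor]]] const0.
have eg : gamma Q = w1.2 * w2.2.
  by transitivity (Phi Q (1, 0)); [rewrite /bqf /=; ring | rewrite factor /cross /=; ring].
have ea : alpha Q = w1.1 * w2.1.
  by transitivity (Phi Q (0, 1)); [rewrite /bqf /=; ring | rewrite factor /cross /=; ring].
have eb : 2%:R * beta Q = w1.1 * w2.2 + w1.2 * w2.1.
  transitivity (gamma Q + alpha Q - Phi Q (1, 1)); first by rewrite /bqf /=; ring.
  by rewrite factor eg ea /cross /=; ring.
have dir_neq0 (w : K * K) : w != (0, 0) -> iota (- w.2) != 0 \/ iota w.1 != 0.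
  by case: w => x y; rewrite xpair_eqE negb_and !fmorph_eq0 oppr_eq0 => /orP [] ->; [right|left].
exists (iota (- w1.2)), (iota w1.1), (iota (w1.2 * cen.1 - w1.1 * cen.2)),
  (iota (- w2.2)), (iota w2.1), (iota (w2.2 * cen.1 - w2.1 * cen.2)).
split; [exact: dir_neq0 | exact: dir_neq0 |].
rewrite -!map_lin2 -rmorphM; congr map_poly.
by rewrite /bisector_conic [PhiQ _ _ _]const0 eb eg ea /lin2 /pC /pX /pY; ring.
Qed.

End Degeneracy.

Section ParallelPair.
Variables (K : fieldType) (g b a : K).
Hypotheses (h2 : 2%:R != 0 :> K) (hdisc : b ^+ 2 - a * g != 0).
Variables (M N : line K) (m1 m2 : point K).
Hypotheses (nM : normalized M) (nN : normalized N) (MN : M <> N) (pMN : parallel M N).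
Hypotheses (m1M : on_line M m1) (m2N : on_line N m2).
Hypotheses (isoM : bqf g b a (lu M, lt M) = 0) (iso12 : bqf g b a (vec m1 m2) = 0).

Let et : lt M = lt N := (normalized_parallel nM nN pMN).1.
Let eu : lu M = lu N := (normalized_parallel nM nN pMN).2.

Let cross_dir_mid : cross (lu M, lt M) (vec m1 m2) = lv N - lv M.
Proof.
move/eqP: m1M => e1; move/eqP: m2N; rewrite -et -eu => e2.
transitivity ((lt M * m1.1 - lu M * m1.2 + lv M) - (lt M * m2.1 - lu M * m2.2 + lv N)
  + (lv N - lv M)).
  by rewrite /cross /=; ring.
by rewrite e1 e2; ring.
Qed.

Let cross_dir_mid_neq0 : cross (lu M, lt M) (vec m1 m2) != 0.
Proof.
rewrite cross_dir_mid subr_eq0; apply/eqP => ev; apply: MN.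
exact: eq_line et eu (esym ev).
Qed.

Let factor : exists2 k, k != 0 &
  forall z, bqf g b a z = k * cross (lu M, lt M) z * cross (vec m1 m2) z.
Proof. exact: bqf_factor_isotropic h2 hdisc isoM iso12 cross_dir_mid_neq0. Qed.

Lemma bqf_splits_parallel_pair : bqf_splits g b a.
Proof.
have [k k_neq0 fact] := factor.
exists (lu M, lt M), (k * (vec m1 m2).1, k * (vec m1 m2).2); split.
- exact: normalized_dir_neq0.
- apply: contra cross_dir_mid_neq0; rewrite xpair_eqE !mulf_eq0 (negbTE k_neq0) /=.
  by case/andP => /eqP e1 /eqP e2; rewrite /cross /= e1 e2 !mulr0 subrr.
by move=> z; rewrite fact /cross /=; ring.
Qed.

Lemma bqf_zero_parallel_pair p :
  bqf g b a (vec (midpoint m1 m2) p) = 0 <->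
  midline M N p \/ on_line (line_thru m1 m2) p.
Proof.
have [k k_neq0 fact] := factor.
have m12 : m1 != m2.
  by apply: contra cross_dir_mid_neq0 => /eqP <-; rewrite /cross /vec /= !subrr !mulr0 subrr.
move/eqP: m1M => e1; move/eqP: m2N; rewrite -et -eu => e2.
have c1 : cross (lu M, lt M) (vec (midpoint m1 m2) p)
          = - (lt M * p.1 - lu M * p.2 + (lv M + lv N) / 2%:R).
  transitivity (- (lt M * p.1 - lu M * p.2 + (lv M + lv N) / 2%:R)
    + (lt M * m1.1 - lu M * m1.2 + lv M) / 2%:R + (lt M * m2.1 - lu M * m2.2 + lv N) / 2%:R).
    by rewrite /cross /vec /midpoint /=; field.
  by rewrite e1 e2; field.
have c2 : cross (vec m1 m2) (vec (midpoint m1 m2) p) = cross (vec m1 m2) (vec m1 p).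
  by rewrite /cross /vec /midpoint /=; field.
rewrite fact c1 c2 (midlineE _ h2 nM nN pMN) on_line_thru //; split.
  by move/eqP; rewrite !mulf_eq0 (negbTE k_neq0) oppr_eq0 /= => /orP [/eqP|] ->; [left|right].
by case=> [->|/eqP ->]; rewrite ?oppr0 !(mulr0, mul0r).
Qed.

End ParallelPair.

Definition diag_det (K : fieldType) (Q : quad K) : K :=
  cross (vec (vAB Q) (vA'B' Q)) (vec (vBA' Q) (vB'A Q)).

Ltac side_conditions := repeat (apply/andP; split); assumption.

Section QuadIdentities.
Variables (K : fieldType) (A B A' B' : line K).
Local Notation Q := (Quad A B A' B').
Local Notation V1 := (vAB Q).
Local Notation V2 := (vBA' Q).
Local Notation V3 := (vA'B' Q).
Local Notation V4 := (vB'A Q).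
Hypothesis h2 : 2%:R != 0 :> K.
Hypotheses (nAB : det A B != 0) (nBA' : det B A' != 0).
Hypotheses (nA'B' : det A' B' != 0) (nB'A : det B' A != 0).

Lemma quad_disc :
  beta Q ^+ 2 - alpha Q * gamma Q = det A B * det B A' * det A' B' * det B' A.
Proof. by rewrite /det /=; ring. Qed.

Ltac unfold_quad := rewrite /diag_det /bqf /vec /cross /line_val /centroid /middiag1 /middiag2
  /midA /midA' /midB /midB' /midpoint /vAB /vBA' /vA'B' /vB'A /meet /det /=.

Let h16 : 16%:R != 0 :> K := pow2_neq0 4 h2.

Lemma bqf_meet_AA' : det A A' != 0 ->
  Phi Q (vec (centroid Q) (meet A A')) = det A A' * det B B' * diag_det Q / 16%:R.
Proof. by move=> nAA'; unfold_quad; field; side_conditions. Qed.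

Lemma bqf_meet_BB' : det B B' != 0 ->
  Phi Q (vec (centroid Q) (meet B B')) = det A A' * det B B' * diag_det Q / 16%:R.
Proof. by move=> nBB'; unfold_quad; field; side_conditions. Qed.

Lemma bqf_diag1 : Phi Q (vec V1 V3) = - det B A' * det B' A * diag_det Q.
Proof. by unfold_quad; field; side_conditions. Qed.

Lemma bqf_middiag :
  Phi Q (vec (middiag1 Q) (middiag2 Q)) = det A A' * det B B' * diag_det Q / 4%:R.
Proof.
have h4 : 4%:R != 0 :> K := pow2_neq0 2 h2.
by unfold_quad; field; side_conditions.
Qed.

Lemma collinear_V1V3V2 :
  cross (vec V1 V3) (vec V1 V2) * det A' B' = - line_val A' V1 * line_val B' V2.
Proof. by unfold_quad; field; side_conditions. Qed.

Lemma collinear_V1V3V4 :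
  cross (vec V1 V3) (vec V1 V4) * det A B = line_val A V3 * line_val B V4.
Proof. by unfold_quad; field; side_conditions. Qed.

Lemma bqf_dir_parallel_AA' : lt A' = lt A -> lu A' = lu A -> Phi Q (lu A, lt A) = 0.
Proof. by move=> et eu; rewrite /bqf /= et eu; ring. Qed.

Lemma bqf_dir_parallel_BB' : lt B' = lt B -> lu B' = lu B -> Phi Q (lu B, lt B) = 0.
Proof. by move=> et eu; rewrite /bqf /= et eu; ring. Qed.

Lemma bqf_mid_parallel_AA' : lt A' = lt A -> lu A' = lu A ->
  Phi Q (vec (midA Q) (midA' Q)) = 0.
Proof.
move=> et eu; move: nBA' nA'B'; unfold_quad; rewrite et eu => ? ?.
by field; side_conditions.
Qed.

Lemma bqf_mid_parallel_BB' : lt B' = lt B -> lu B' = lu B ->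
  Phi Q (vec (midB Q) (midB' Q)) = 0.
Proof.
move=> et eu; move: nA'B' nB'A; unfold_quad; rewrite et eu => ? ?.
by field; side_conditions.
Qed.

End QuadIdentities.

Section DiagonalMeet.
Variables (K : fieldType) (p1 p3 : point K) (wA wB wA' wB' : K * K).
Local Notation A := (line_dir p1 wA).
Local Notation B := (line_dir p1 wB).
Local Notation A' := (line_dir p3 wA').
Local Notation B' := (line_dir p3 wB').
Local Notation p2 := (meet B A').
Local Notation p4 := (meet B' A).
Hypothesis h2 : 2%:R != 0 :> K.
Hypotheses (nBA' : cross wB wA' != 0) (nB'A : cross wB' wA != 0).

Lemma bqf_diag_meet_dir : cross (vec p1 p3) (vec p2 p4) != 0 ->
  Phi (Quad A B A' B')
    (vec (midpoint (midpoint p1 p3) (midpoint p2 p4))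
         (meet (line_dir p1 (vec p1 p3)) (line_dir p2 (vec p2 p4))))
  = cross wA wA' * cross wB wB' * cross (vec p1 p3) (vec p2 p4) / 16%:R.
Proof.
have h16 : 16%:R != 0 :> K := pow2_neq0 4 h2.
rewrite /bqf /vec /cross /midpoint /meet /line_dir /= => dd_neq0.
field; repeat (apply/andP; split) => //.
(* What remains is the numerator of [cross (vec p1 p3) (vec p2 p4)]. *)
apply: contra dd_neq0 => /eqP N0; apply/eqP.
by rewrite -[RHS](mul0r (cross wB' wA * cross wB wA')^-1) -N0 /cross; field; side_conditions.
Qed.
End DiagonalMeet.

Definition bisector_splits (K : fieldType) (L : closedFieldType) (iota : {rmorphism K -> L})
    (Q : quad K) (ab : point K) (M N : line K) (m1 m2 : point K) : Prop :=
  degenerate iota (bisector_conic Q ab)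
  /\ forall p, bisector_locus Q ab p <-> midline M N p \/ on_line (line_thru m1 m2) p.

Lemma bisector_splits_parallel_pair (K : fieldType) (L : closedFieldType)
    (iota : {rmorphism K -> L}) (Q : quad K) ab (M N : line K) (m1 m2 : point K) :
  2%:R != 0 :> K -> beta Q ^+ 2 - alpha Q * gamma Q != 0 ->
  Phi Q (vec (centroid Q) ab) = 0 ->
  normalized M -> normalized N -> M <> N -> parallel M N ->
  on_line M m1 -> on_line N m2 -> centroid Q = midpoint m1 m2 ->
  Phi Q (lu M, lt M) = 0 -> Phi Q (vec m1 m2) = 0 ->
  bisector_splits iota Q ab M N m1 m2.
Proof.
move=> h2 hdisc c0 nM nN MN pMN m1M m2N cenE isoM iso12; split.
  apply: (bisector_conic_degenerate iota _ c0).
  exact: (bqf_splits_parallel_pair h2 hdisc nM nN MN pMN m1M m2N isoM iso12).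
move=> p; rewrite /bisector_locus eval2_bisector_conic c0 subr0 -surjective_pairing cenE.
exact: (bqf_zero_parallel_pair h2 hdisc nM nN MN pMN m1M m2N isoM iso12 p).
Qed.

Lemma centroid_midsA (K : fieldType) (Q : quad K) : centroid Q = midpoint (midA Q) (midA' Q).
Proof.
rewrite /centroid /middiag1 /middiag2 /midA /midA' /midpoint.
by move: (vAB Q) (vBA' Q) (vA'B' Q) (vB'A Q) => [? ?] [? ?] [? ?] [? ?] /=; congr (_, _); ring.
Qed.

Lemma centroid_midsB (K : fieldType) (Q : quad K) : centroid Q = midpoint (midB Q) (midB' Q).
Proof.
rewrite /centroid /middiag1 /middiag2 /midB /midB' /midpoint.
by move: (vAB Q) (vBA' Q) (vA'B' Q) (vB'A Q) => [? ?] [? ?] [? ?] [? ?] /=; congr (_, _); ring.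
Qed.

Section BisectorLocus.
Variables (K : fieldType) (L : closedFieldType) (iota : {rmorphism K -> L}).
Variables (A B A' B' : line K) (ab : point K).
Local Notation Q := (Quad A B A' B').
Local Notation V1 := (vAB Q).
Local Notation V2 := (vBA' Q).
Local Notation V3 := (vA'B' Q).
Local Notation V4 := (vB'A Q).
Hypotheses (h2 : 2%:R != 0 :> K) (hQ : is_quadrilateral Q) (hab : finite_diag_point Q ab).

Let normalized_sides : [/\ normalized A, normalized B, normalized A' & normalized B'].
Proof. by case: hQ => /and4P. Qed.

Let distinct_sides : [/\ A <> B, A <> A', A <> B' & [/\ B <> A', B <> B' & A' <> B']].
Proof. by case: hQ. Qed.

Let not_concurrent p : on_line A p -> on_line B p -> on_line A' p -> on_line B' p -> False.
Proof. by case: hQ => _ _ + _ => nc pA pB pA' pB'; apply: nc; exists p; rewrite pA pB pA' pB'. Qed.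

Let adjacent : [/\ ~~ parallel A B, ~~ parallel B A', ~~ parallel A' B' & ~~ parallel B' A].
Proof. by case: hQ => _ _ _ /and4P. Qed.

Let nAB : det A B != 0. Proof. by rewrite -parallel_det; case: adjacent. Qed.
Let nBA' : det B A' != 0. Proof. by rewrite -parallel_det; case: adjacent. Qed.
Let nA'B' : det A' B' != 0. Proof. by rewrite -parallel_det; case: adjacent. Qed.
Let nB'A : det B' A != 0. Proof. by rewrite -parallel_det; case: adjacent. Qed.

Let disc_neq0 : beta Q ^+ 2 - alpha Q * gamma Q != 0.
Proof. by rewrite quad_disc !mulf_neq0. Qed.

Let V1_on : on_line A V1 /\ on_line B V1. Proof. by apply: meet_on; case: adjacent. Qed.
Let V2_on : on_line B V2 /\ on_line A' V2. Proof. by apply: meet_on; case: adjacent. Qed.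
Let V3_on : on_line A' V3 /\ on_line B' V3. Proof. by apply: meet_on; case: adjacent. Qed.
Let V4_on : on_line B' V4 /\ on_line A V4. Proof. by apply: meet_on; case: adjacent. Qed.

Let V13 : V1 != V3.
Proof.
apply/eqP => e; case: V1_on V3_on => V1A V1B [V3A' V3B'].
by apply: (not_concurrent V1A V1B); rewrite e.
Qed.

Let V24 : V2 != V4.
Proof.
apply/eqP => e; case: V2_on V4_on => V2B V2A' [V4B' V4A].
by apply: (not_concurrent (p := V2)); rewrite // e.
Qed.

Lemma parallel_diagonals : parallel (diag1 Q) (diag2 Q) = (diag_det Q == 0).
Proof. exact: parallel_line_thru. Qed.

Lemma bqf_diag_point P : ~~ parallel (diag1 Q) (diag2 Q) ->
  on_line (diag1 Q) P -> on_line (diag2 Q) P ->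
  Phi Q (vec (centroid Q) P) = det A A' * det B B' * diag_det Q / 16%:R.
Proof.
rewrite /diag1 /diag2 !on_line_thru_dir // => npd P1 P2.
have dd_neq0 : diag_det Q != 0 by rewrite -parallel_diagonals.
rewrite (meet_uniq _ P1 P2) ?parallel_line_dir //.
have := @bqf_diag_meet_dir K V1 V3 (lu A, lt A) (lu B, lt B) (lu A', lt A') (lu B', lt B')
  h2 nBA' nB'A.
case: V1_on V2_on V3_on V4_on => V1A V1B [_ _] [V3A' V3B'] _.
by rewrite (line_dirE V1A) (line_dirE V1B) (line_dirE V3A') (line_dirE V3B'); apply.
Qed.

Lemma bisector_const :
  Phi Q (vec (centroid Q) ab) = det A A' * det B B' * diag_det Q / 16%:R.
Proof.
case: hab => [/and3P [pAA' abA abA'] | /and3P [pBB' abB abB'] | /and3P [pd ab1 ab2]].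
- by rewrite (meet_uniq pAA' abA abA') bqf_meet_AA' // -parallel_det.
- by rewrite (meet_uniq pBB' abB abB') bqf_meet_BB' // -parallel_det.
- exact: bqf_diag_point.
Qed.

Lemma bisector_const_eq0 : Phi Q (vec (centroid Q) ab) = 0 <->
  [\/ parallel A A', parallel B B' | parallel (diag1 Q) (diag2 Q)].
Proof.
have h16 : 16%:R != 0 :> K := pow2_neq0 4 h2.
rewrite bisector_const parallel_diagonals !parallel_det; split.
  move/eqP; rewrite mulf_eq0 invr_eq0 (negbTE h16) orbF !mulf_eq0.
  by case/orP => [/orP [] | ] ->; [constructor 1 | constructor 2 | constructor 3].
by case=> /eqP ->; rewrite ?(mul0r, mulr0).
Qed.

(* If the diagonals coincided, the four vertices would be collinear; the two
   collinearity identities then force three sides through a vertex, and in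
   each case all four sides become concurrent or two of them coincide. *)
Lemma diagonals_neq : diag1 Q <> diag2 Q.
Proof.
move=> d12.
have d1V2 : cross (vec V1 V3) (vec V1 V2) == 0.
  by rewrite -on_line_thru // -[line_thru _ _]/(diag1 Q) d12 on_line_thru_l.
have d1V4 : cross (vec V1 V3) (vec V1 V4) == 0.
  by rewrite -on_line_thru // -[line_thru _ _]/(diag1 Q) d12 on_line_thru_r.
case: V1_on V2_on V3_on V4_on => V1A V1B [V2B V2A'] [V3A' V3B'] [V4B' V4A].
case: adjacent => pAB _ pA'B' _; case: normalized_sides => nA nB nA' nB'.
case: distinct_sides => _ AA' _ [_ BB' _].
have /eqP := collinear_V1V3V4 nAB nA'B' nB'A.
rewrite (eqP d1V4) mul0r eq_sym mulf_eq0 => /orP [V3A|V4B].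
  have /eqP := collinear_V1V3V2 nAB nBA' nA'B'.
  rewrite (eqP d1V2) mul0r eq_sym mulf_eq0 oppr_eq0 => /orP [V1A'|V2B'].
    have [pAA'|npAA'] := boolP (parallel A A').
      by apply: AA'; apply: (normalized_parallel_eq nA nA' pAA' V1A V1A').
    by move: V13; rewrite (meet_uniq npAA' V1A V1A') (meet_uniq npAA' V3A V3A') eqxx.
  have V23 := meet_uniq pA'B' V2A' V2B'.
  by apply: (not_concurrent V3A _ V3A' V3B'); move: V2B; rewrite V23.
have V41 := meet_uniq pAB V4A V4B.
have /eqP := collinear_V1V3V2 nAB nBA' nA'B'.
rewrite (eqP d1V2) mul0r eq_sym mulf_eq0 oppr_eq0 => /orP [V1A'|V2B'].
  by apply: (not_concurrent V1A V1B V1A'); move: V4B'; rewrite V41.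
have [pBB'|npBB'] := boolP (parallel B B').
  by apply: BB'; apply: (normalized_parallel_eq nB nB' pBB' V2B V2B').
by move: V24; rewrite (meet_uniq npBB' V2B V2B') (meet_uniq npBB' V4B V4B') eqxx.
Qed.

Lemma parallel_of_degenerate : degenerate iota (bisector_conic Q ab) ->
  [\/ parallel A A', parallel B B' | parallel (diag1 Q) (diag2 Q)].
Proof. by move/(bisector_const_degenerate h2 disc_neq0)/bisector_const_eq0. Qed.

Lemma sides_A_splits : parallel A A' -> bisector_splits iota Q ab A A' (midA Q) (midA' Q).
Proof.
move=> pAA'; case: normalized_sides => nA _ nA' _; case: distinct_sides => _ AA' _ _.
case: V1_on V2_on V3_on V4_on => V1A _ [_ V2A'] [V3A' _] [_ V4A].
have [et eu] := normalized_parallel nA nA' pAA'.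
apply: (bisector_splits_parallel_pair iota h2 disc_neq0 _ nA nA' AA' pAA').
- by apply/bisector_const_eq0; constructor 1.
- exact: on_line_midpoint h2 V1A V4A.
- exact: on_line_midpoint h2 V2A' V3A'.
- exact: centroid_midsA.
- exact: bqf_dir_parallel_AA' (esym et) (esym eu).
- exact: bqf_mid_parallel_AA' h2 nAB nBA' nA'B' nB'A (esym et) (esym eu).
Qed.

Lemma sides_B_splits : parallel B B' -> bisector_splits iota Q ab B B' (midB Q) (midB' Q).
Proof.
move=> pBB'; case: normalized_sides => _ nB _ nB'; case: distinct_sides => _ _ _ [_ BB' _].
case: V1_on V2_on V3_on V4_on => _ V1B [V2B _] [_ V3B'] [V4B' _].
have [et eu] := normalized_parallel nB nB' pBB'.
apply: (bisector_splits_parallel_pair iota h2 disc_neq0 _ nB nB' BB' pBB').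
- by apply/bisector_const_eq0; constructor 2.
- exact: on_line_midpoint h2 V1B V2B.
- exact: on_line_midpoint h2 V3B' V4B'.
- exact: centroid_midsB.
- exact: bqf_dir_parallel_BB' (esym et) (esym eu).
- exact: bqf_mid_parallel_BB' h2 nAB nBA' nA'B' nB'A (esym et) (esym eu).
Qed.

Lemma diagonals_splits : parallel (diag1 Q) (diag2 Q) ->
  bisector_splits iota Q ab (diag1 Q) (diag2 Q) (middiag1 Q) (middiag2 Q).
Proof.
move=> pd; have dd0 : diag_det Q = 0 by apply/eqP; rewrite -parallel_diagonals.
apply: (bisector_splits_parallel_pair iota h2 disc_neq0 _
  (line_thru_normalized _ _) (line_thru_normalized _ _) diagonals_neq pd).
- by apply/bisector_const_eq0; constructor 3.
- exact: on_line_midpoint h2 (on_line_thru_l V13) (on_line_thru_r V13).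
- exact: on_line_midpoint h2 (on_line_thru_l V24) (on_line_thru_r V24).
- by [].
- have [s _ [-> -> _]] := line_thru_coef V13.
  by rewrite bqfZ bqf_diag1 // dd0 !mulr0.
- by rewrite bqf_middiag // dd0 mulr0 mul0r.
Qed.

End BisectorLocus.

Theorem theorem5p2 (K : fieldType) (L : closedFieldType)
  (iota : {rmorphism K -> L}) (Q : quad K) (ab : point K) :
  (2%:R : K) != 0 ->
  is_alg_closure iota ->
  is_quadrilateral Q ->
  finite_diag_point Q ab ->
  (degenerate iota (bisector_conic Q ab) <->
     [\/ parallel (qA Q) (qA' Q), parallel (qB Q) (qB' Q)
       | parallel (diag1 Q) (diag2 Q)])
  /\ (parallel (qA Q) (qA' Q) -> forall p : point K,
        bisector_locus Q ab p <->
        midline (qA Q) (qA' Q) p \/ on_line (line_thru (midA Q) (midA' Q)) p)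
  /\ (parallel (qB Q) (qB' Q) -> forall p : point K,
        bisector_locus Q ab p <->
        midline (qB Q) (qB' Q) p \/ on_line (line_thru (midB Q) (midB' Q)) p)
  /\ (parallel (diag1 Q) (diag2 Q) -> forall p : point K,
        bisector_locus Q ab p <->
        midline (diag1 Q) (diag2 Q) p
        \/ on_line (line_thru (middiag1 Q) (middiag2 Q)) p).
Proof.
move=> h2 _; case: Q => A B A' B' hQ hab.
have splitA := sides_A_splits iota h2 hQ hab.
have splitB := sides_B_splits iota h2 hQ hab.
have splitD := diagonals_splits iota h2 hQ hab.
split; first split.
- exact: parallel_of_degenerate.
- by case=> [/splitA|/splitB|/splitD] [].
split; first by case/splitA.
split; first by case/splitB.
by case/splitD.
Qed.
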